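(* Let $b,\ell\ge1$, $s=2^b$, and let $G'$ be obtained from $G_{b,\ell}$ by deleting an arbitrary subset $R$ of the vertices $\{v_{\ell,\vec j}:\vec j\in[0,s-1]^\ell\}$ together with their incident edges. Let $\vec x,\vec z\in[0,s-1]^\ell$ with $z_k-x_k$ even for all $k$. Then whether $v_{\ell,(\vec x+\vec z)/2}\in R$ is determined by $\vec x$, $\vec z$ and the (possibly infinite) length of a shortest path between $v_{0,\vec x}$ and $v_{2\ell,\vec z}$ in $G'$; namely $v_{\ell,(\vec x+\vec z)/2}\notin R$ iff this distance equals $\mathrm{dist}_{G_{b,\ell}}(v_{0,\vec x},v_{2\ell,\vec z})$.
   Context: Notation $[a,b]=\{a,\dots,b\}$. Fix integers $b,\ell\ge1$, $s=2^b$, $A=3\ell s^2$. The weighted graph $H_{b,\ell}$ has vertex set $\bigcup_{i=0}^{2\ell}V_i$, $V_i=\{v_{i,\vec j}:\vec j\in[0,s-1]^\ell\}$; for $i\in[0,2\ell-1]$ let $c(i)=i+1$ if $i<\ell$, $c(i)=2\ell-i$ if $i\ge\ell$; $v_{i,\vec j}$ and $v_{i+1,\vec j'}$ are adjacent iff $j_k=j'_k$ for all $k\ne c(i)$, with weight $A+(j_{c(i)}-j'_{c(i)})^2$; no other edges. The unweighted graph $G_{b,\ell}$: each $v\in V_i$ is kept and gets attached (root adjacent to $v$) a complete binary tree $T^{\mathrm{in}}_v$ of depth $b$ (only if $i>0$) with leaves $v^{\mathrm{in}}_u$ for the neighbors $u\in V_{i-1}$, and a complete binary tree $T^{\mathrm{out}}_v$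 of depth $b$ (only if $i<2\ell$) with leaves $v^{\mathrm{out}}_u$ for the neighbors $u\in V_{i+1}$; all trees disjoint; for every edge $e=\{u,v\}$ of $H_{b,\ell}$, $u\in V_i$, $v\in V_{i+1}$, the leaves $u^{\mathrm{out}}_v$ and $v^{\mathrm{in}}_u$ are joined by a path of length $w(e)-2b-2$ through new vertices. *)

From mathcomp Require Import all_boot.
Set Implicit Arguments. Unset Strict Implicit. Unset Printing Implicit Defensive.

(* Conventions.  Index vectors j in [0,s-1]^l are sequences of length l;
   the paper's coordinate k in [1,l] is position k-1 of the sequence. *)

Definition sz (b : nat) : nat := 2 ^ b.
Definition Aw (b l : nat) : nat := 3 * l * (sz b) ^ 2.

(* c(i) - 1  (0-based coordinate changed between layers i and i+1) *)
Definition cc (l i : nat) : nat := if i < l then i else (2 * l - i).-1.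

Definition valid_idx (b l : nat) (j : seq nat) : Prop :=
  size j = l /\ forall k, k < l -> nth 0 j k < sz b.

(* weight of the H-edge from v_{i,j} to v_{i+1,j'} with j' = j[c(i) := t] *)
Definition wt (b l i : nat) (j : seq nat) (t : nat) : nat :=
  let a := nth 0 j (cc l i) in Aw b l + (maxn a t - minn a t) ^ 2.

Definition plen (b l i : nat) (j : seq nat) (t : nat) : nat := wt b l i j t - 2 * b - 2.

(* Vertices of G_{b,l}:
   VMain i j          = v_{i,j}
   VTree i j o d p    = node at depth d (root: d = 0), heap position p < 2^d,
                        of T^out_{v_{i,j}} (o = true) or T^in_{v_{i,j}} (o = false);
                        leaves are at depth b
   VPath i j t q      = q-th interior vertex of the path subdividing the edge
                        {v_{i,j}, v_{i+1, j[c(i):=t]}} (counted from the out-leaf side) *)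
Inductive vtx : Type :=
| VMain of nat & seq nat
| VTree of nat & seq nat & bool & nat & nat
| VPath of nat & seq nat & nat & nat.

(* Leaf labelling: [lab o i j t] is the (depth-b) leaf position, in the tree
   T^out (o = true) resp. T^in (o = false) of v_{i,j}, of the leaf associated
   with the neighbour of v_{i,j} whose c-coordinate is t.  The paper leaves this
   bijection unspecified; the theorem is stated for every such labelling. *)
Definition labelling := bool -> nat -> seq nat -> nat -> nat.

Definition good_lab (b : nat) (lab : labelling) : Prop :=
  forall o i j t t', t < sz b -> t' < sz b ->
    lab o i j t < sz b /\ (lab o i j t = lab o i j t' -> t = t').

(* q-th vertex (0 <= q <= plen) of the path from u^out_v to v^in_u,
   u = v_{i,j}, v = v_{i+1, j[c(i):=t]} *)
Definition pathpt (b l : nat) (lab : labelling) (i : nat) (j : seq nat) (t q : nat) : vtx :=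
  let j' := set_nth 0 j (cc l i) t in
  if q == 0 then VTree i j true b (lab true i j t)
  else if q == plen b l i j t then VTree i.+1 j' false b (lab false i.+1 j' (nth 0 j (cc l i)))
  else VPath i j t q.

Inductive arc (b l : nat) (lab : labelling) : vtx -> vtx -> Prop :=
| arc_root_out i j : i < 2 * l -> valid_idx b l j ->
    arc b l lab (VMain i j) (VTree i j true 0 0)
| arc_root_in i j : 0 < i -> i <= 2 * l -> valid_idx b l j ->
    arc b l lab (VMain i j) (VTree i j false 0 0)
| arc_tree i j (o : bool) d p c : valid_idx b l j ->
    (if o then i < 2 * l else (0 < i) && (i <= 2 * l)) ->
    d < b -> p < 2 ^ d -> c < 2 ->
    arc b l lab (VTree i j o d p) (VTree i j o d.+1 (2 * p + c))
| arc_path i j t q : i < 2 * l -> valid_idx b l j -> t < sz b -> q < plen b l i j t ->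
    arc b l lab (pathpt b l lab i j t q) (pathpt b l lab i j t q.+1).

Definition adjG (b l : nat) (lab : labelling) (u v : vtx) : Prop :=
  arc b l lab u v \/ arc b l lab v u.

Inductive walk (adj : vtx -> vtx -> Prop) (ok : vtx -> Prop) : nat -> vtx -> vtx -> Prop :=
| walk0 u : ok u -> walk adj ok 0 u u
| walkS n u w v : ok u -> adj u w -> walk adj ok n w v -> walk adj ok n.+1 u v.

Definition is_dist (adj : vtx -> vtx -> Prop) (ok : vtx -> Prop) (u v : vtx)
  (d : option nat) : Prop :=
  match d with
  | Some n => walk adj ok n u v /\ forall m, m < n -> ~ walk adj ok m u v
  | None => forall n, ~ walk adj ok n u v
  end.

Definition kept (l : nat) (R : seq nat -> Prop) (v : vtx) : Prop :=
  ~ (exists j, v = VMain l j /\ R j).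

Definition midpoint (l : nat) (x z : seq nat) : seq nat :=
  mkseq (fun k => (nth 0 x k + nth 0 z k)./2) l.

(* For a direction lam in Z^l with |lam_k| <= s, the function
       phi(i,j) = i A + sum_k (2 lam_k j_k - phase(i,k) lam_k^2)
     grows along an H-edge by A + 2 lam_c (t-u) - lam_c^2 <= A + (t-u)^2 = w(e);
     as A is large, it extends to a 1-Lipschitz potential Phi on G.  A walk
     crosses the middle layer at some v_{l,j}; bounding its two halves with
     the directions j - x and z - j shows that it has length at least
     2lA + |j - x|^2 + |z - j|^2 = 2lA + Cost(j).
   - Upper bound.  The route of H turning x into m one coordinate at a time,
     then m into z, is realised in G; its edges are tight for those
     potentials, so its length is exactly 2lA + Cost(m).
   - Since x - z is even, Cost(j) = Cost(m) + 2 |j - m|^2.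
   Hence the distance in G is 2lA + Cost(m), and it is the same in G' iff
   v_{l,m} survives: otherwise every walk of G' crosses at some j <> m and is
   strictly longer. *)

From mathcomp Require Import all_boot all_order all_algebra zify ring.
Import Order.TTheory GRing.Theory Num.Theory.

Set Implicit Arguments.
Unset Strict Implicit.
Unset Printing Implicit Defensive.

Section Walks.
Variables (adj : vtx -> vtx -> Prop) (ok : vtx -> Prop).

Lemma walk_ok_l n u v : walk adj ok n u v -> ok u.
Proof. by case. Qed.

Lemma walk_cat n1 n2 u w v :
  walk adj ok n1 u w -> walk adj ok n2 w v -> walk adj ok (n1 + n2) u v.
Proof.
elim=> [// | n a c d ok_a adj_ac _ IH] Wdv.
by rewrite addSn; apply: walkS ok_a adj_ac (IH Wdv).
Qed.

Lemma walk1 u v : ok u -> ok v -> adj u v -> walk adj ok 1 u v.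
Proof. by move=> ok_u ok_v adj_uv; apply: walkS ok_u adj_uv (walk0 _ ok_v). Qed.

Lemma walk_rev n u v :
  (forall a c, adj a c -> adj c a) -> walk adj ok n u v -> walk adj ok n v u.
Proof.
move=> adj_sym; elim=> [a ok_a | m a w c ok_a adj_aw Wwc IH]; first exact: walk0.
rewrite -addn1; apply: walk_cat IH (walk1 (walk_ok_l Wwc) ok_a (adj_sym _ _ adj_aw)).
Qed.

Lemma walk_first_step n u v : walk adj ok n u v -> u <> v -> exists c, adj u c.
Proof. by case=> [a _ /(_ erefl) | m a w c _ adj_aw _ _] //; exists w. Qed.

Lemma walk_potential (F : vtx -> int) n u v :
  (forall a c, adj a c -> `|F a - F c| <= 1)%R ->
  walk adj ok n u v -> (F v - F u <= n%:Z)%R.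
Proof.
move=> F_lip; elim=> [a _ | m a w c _ adj_aw _ IH]; first by rewrite subrr.
have := F_lip _ _ adj_aw; lia.
Qed.

Lemma walk_cut (f : vtx -> nat) :
  (forall a c, adj a c -> [\/ f a = f c, f a = 1 | f c = 1]) ->
  forall n u v, walk adj ok n u v -> f u = 0 -> f v = 2 ->
  exists w n1 n2, [/\ f w = 1, n1 + n2 = n, walk adj ok n1 u w & walk adj ok n2 w v].
Proof.
move=> f_adj n u v; elim=> {n u v} [a _ -> // | m a w c ok_a adj_aw Wwc IH fa0 fc2].
case: (f_adj _ _ adj_aw) => [faw | fa1 | fw1]; first last.
- by exists w, 1, m; split; rewrite ?add1n //; apply: walk1 (walk_ok_l Wwc) adj_aw.
- by rewrite fa1 in fa0.
have [w' [n1 [n2 [fw'1 n12 W1 W2]]]] := IH (etrans (esym faw) fa0) fc2.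
by exists w', n1.+1, n2; split; rewrite ?addSn ?n12 //; apply: walkS ok_a adj_aw W1.
Qed.

End Walks.

Lemma walk_mono (adj : vtx -> vtx -> Prop) (ok ok' : vtx -> Prop) n u v :
  (forall a, ok a -> ok' a) -> walk adj ok n u v -> walk adj ok' n u v.
Proof.
move=> ok_sub; elim=> [a /ok_sub ok_a | m a w c /ok_sub ok_a adj_aw _ IH].
  exact: walk0.
exact: walkS ok_a adj_aw IH.
Qed.

Lemma is_dist_Some (adj : vtx -> vtx -> Prop) (ok : vtx -> Prop) n u v :
  walk adj ok n u v -> (forall m, walk adj ok m u v -> n <= m) ->
  is_dist adj ok u v (Some n).
Proof. by move=> W n_min; split=> // m lt_mn /n_min; rewrite leqNgt lt_mn. Qed.

Definition hnext (l i : nat) (j : seq nat) (t : nat) : seq nat := set_nth 0 j (cc l i) t.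

Lemma cc_lt l i : i < 2 * l -> cc l i < l.
Proof. by rewrite /cc; case: ifP; lia. Qed.

Lemma valid_hnext b l i j t :
  i < 2 * l -> valid_idx b l j -> t < sz b -> valid_idx b l (hnext l i j t).
Proof.
move=> /cc_lt lt_c [size_j j_lt] lt_t; split=> [|k lt_k].
  by rewrite size_set_nth size_j; apply/maxn_idPr.
by rewrite nth_set_nth /=; case: ifP => // _; apply: j_lt.
Qed.

Lemma sz_gt b : b < sz b.
Proof. exact: ltn_expl. Qed.

Lemma Aw_ge b l : 0 < l -> 3 * sz b ^ 2 <= Aw b l.
Proof. by move=> l_gt0; rewrite /Aw; nia. Qed.

Section Graph.
Variables (b l : nat) (lab : labelling).
Local Notation adj := (adjG b l lab).

Lemma adjG_sym u v : adj u v -> adj v u.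
Proof. by case; [right | left]. Qed.

Lemma pathpt_VMain i j t q i' j' : pathpt b l lab i j t q <> VMain i' j'.
Proof. by rewrite /pathpt; case: ifP => _ //; case: ifP. Qed.

Lemma adjG_VMain_valid i j c : adj (VMain i j) c -> valid_idx b l j.
Proof.
suff arc_valid u v : arc b l lab u v -> u = VMain i j \/ v = VMain i j -> valid_idx b l j.
  by case=> /arc_valid; apply; [left | right].
case=> [i' j' _ vj' | i' j' _ _ vj' | ? ? ? ? ? ? _ _ _ _ _ | ? ? ? ? _ _ _ _].
- by case=> // [[_ <-]].
- by case=> // [[_ <-]].
- by case.
- by case=> /pathpt_VMain.
Qed.

(* Position of a vertex relative to the middle layer V_l: 0 before it (this
   includes the in-trees of layer l), 1 on it, 2 after it. *)
Definition side (v : vtx) : nat :=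
  match v with
  | VMain i _ => if i < l then 0 else if i == l then 1 else 2
  | VTree i _ o _ _ => if i < l then 0 else if (i == l) && ~~ o then 0 else 2
  | VPath i _ _ _ => if i < l then 0 else 2
  end.

Lemma side_pathpt i j t q : side (pathpt b l lab i j t q) = if i < l then 0 else 2.
Proof. by rewrite /pathpt; do ![case: ifP => ? /=]; rewrite ?andbT; lia. Qed.

Lemma adj_side u v : adj u v -> [\/ side u = side v, side u = 1 | side v = 1].
Proof.
suff arc_side x y : arc b l lab x y -> [\/ side x = side y, side x = 1 | side y = 1].
  by case=> /arc_side [->|->|->]; [exact: Or31 | exact: Or32 | exact: Or33
                                  | exact: Or31 | exact: Or33 | exact: Or32].
case=> [i j _ _ | i j _ _ _ | * | *]; rewrite /= ?side_pathpt ?andbT; try exact: Or31.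
all: case: ifP => _; [|case: ifP => _]; by [exact: Or31 | exact: Or32 | exact: Or33].
Qed.

Lemma side1_VMain v : side v = 1 -> exists j, v = VMain l j.
Proof.
case: v => [i j | i j o d p | i j t q] /=; do ![case: ifP => //].
by move=> /eqP -> _ _; exists j.
Qed.

Lemma walk_through_middle ok n x z :
  0 < l -> walk adj ok n (VMain 0 x) (VMain (2 * l) z) ->
  exists j n1 n2, [/\ valid_idx b l j, n1 + n2 = n,
    walk adj ok n1 (VMain 0 x) (VMain l j) & walk adj ok n2 (VMain l j) (VMain (2 * l) z)].
Proof.
move=> l_gt0 W.
have side_x : side (VMain 0 x) = 0 by rewrite /= l_gt0.
have side_z : side (VMain (2 * l) z) = 2 by rewrite /= ifF ?ifF //; lia.
have [w [n1 [n2 [/side1_VMain [j ->] n12 W1 W2]]]] := walk_cut adj_side W side_x side_z.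
exists j, n1, n2; split=> //.
have [|c /adjG_VMain_valid //] := walk_first_step W2.
by move=> [eq_l]; lia.
Qed.

Lemma kept_pathpt {R i j t q} : kept l R (pathpt b l lab i j t q).
Proof. by rewrite /pathpt; case: ifP => _; [|case: ifP => _]; case=> ? []. Qed.

Lemma kept_tree {R i j o d p} : kept l R (VTree i j o d p).
Proof. by case=> ? []. Qed.

Lemma tree_climb R i j (o : bool) d p :
  valid_idx b l j -> (if o then i < 2 * l else (0 < i) && (i <= 2 * l)) ->
  d <= b -> p < 2 ^ d ->
  walk adj (kept l R) d (VTree i j o d p) (VTree i j o 0 0).
Proof.
move=> vj tree_ok; elim: d p => [|d IH] p le_db lt_p.
  by rewrite expn0 ltnS leqn0 in lt_p; rewrite (eqP lt_p); apply/walk0/kept_tree.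
have lt_half : p %/ 2 < 2 ^ d by rewrite expnS in lt_p; lia.
apply: walkS (IH _ (ltnW le_db) lt_half); first exact: kept_tree.
apply: or_intror; rewrite {2}(divn_eq p 2) mulnC.
by apply: arc_tree; rewrite ?ltn_mod.
Qed.

Lemma subdivision_walk R i j t q :
  i < 2 * l -> valid_idx b l j -> t < sz b -> q <= plen b l i j t ->
  walk adj (kept l R) q (pathpt b l lab i j t 0) (pathpt b l lab i j t q).
Proof.
move=> lt_i vj lt_t; elim: q => [|q IH] le_q; first exact/walk0/kept_pathpt.
rewrite -addn1; apply: walk_cat (IH (ltnW le_q)) _.
by apply: walk1; [exact: kept_pathpt | exact: kept_pathpt | left; rewrite addn1; apply: arc_path].
Qed.

(* Each edge v_{i,j} v_{i+1,j'} of H is realised in G by a walk of length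
   w(e): root edge, down T^out, the subdivided edge, up T^in, root edge.  Only
   its two endpoints are vertices of H. *)
Lemma edge_walk R i j t :
  good_lab b lab -> i < 2 * l -> valid_idx b l j -> t < sz b ->
  kept l R (VMain i j) -> kept l R (VMain i.+1 (hnext l i j t)) ->
  walk adj (kept l R) (wt b l i j t) (VMain i j) (VMain i.+1 (hnext l i j t)).
Proof.
move=> good lt_i vj lt_t keep_j keep_j'.
have vj' := valid_hnext lt_i vj lt_t.
have lt_u : nth 0 j (cc l i) < sz b by case: vj => _; apply; apply: cc_lt.
have [leaf_out _] := good true i j t t lt_t lt_t.
have [leaf_in _] := good false i.+1 (hnext l i j t) _ _ lt_u lt_u.
have A_ge := Aw_ge b (leq_ltn_trans (leq0n _) (cc_lt lt_i)).
have s_gt := sz_gt b.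
have plen_gt0 : plen b l i j t != 0 by rewrite /plen /wt; nia.
have root_out : walk adj (kept l R) 1 (VMain i j) (VTree i j true 0 0).
  by apply: walk1 => //; [exact: kept_tree | apply: or_introl; exact: arc_root_out].
have down_out := walk_rev (@adjG_sym) (@tree_climb R i j true b _ vj lt_i (leqnn b) leaf_out).
have edge := subdivision_walk R lt_i vj lt_t (leqnn _).
rewrite /pathpt !eqxx (negbTE plen_gt0) in edge.
have up_in := @tree_climb R i.+1 _ false b _ vj' lt_i (leqnn b) leaf_in.
have root_in : walk adj (kept l R) 1 (VTree i.+1 (hnext l i j t) false 0 0)
                                    (VMain i.+1 (hnext l i j t)).
  by apply: walk1 => //; [exact: kept_tree | apply: or_intror; exact: arc_root_in].
have -> : wt b l i j t = 1 + b + plen b l i j t + b + 1 by rewrite /plen /wt; nia.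
exact: walk_cat (walk_cat (walk_cat (walk_cat root_out down_out) edge) up_in) root_in.
Qed.

End Graph.

(* [phase l i k] counts the steps among layers 0..i-1 that change coordinate
   k < l: coordinate k is changed once at step k (first half) and once at step
   2l-1-k (second half). *)
Definition phase (l i k : nat) : nat :=
  if i <= k then 0 else if i < 2 * l - k then 1 else 2.

Lemma phase_step l i k : i < 2 * l -> k < l ->
  phase l i.+1 k = phase l i k + (k == cc l i).
Proof. by move=> lt_i lt_k; rewrite /phase /cc; do ![case: ifP]; case: eqP; lia. Qed.

Lemma phase_cc l i : i < 2 * l -> phase l i (cc l i) = (l <= i).
Proof. by move=> lt_i; rewrite /phase /cc; do ![case: ifP]; lia. Qed.

Lemma phase_l l k : k < l -> phase l l k = 1.
Proof. by move=> lt_k; rewrite /phase; do ![case: ifP]; lia. Qed.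

Lemma phase_2l l k : k < l -> phase l (2 * l) k = 2.
Proof. by move=> lt_k; rewrite /phase; do ![case: ifP]; lia. Qed.

(* The route through H from v_{0,x} via v_{l,m} to v_{2l,z}: the first l steps
   replace the coordinates of x by those of m, the last l steps those of m by
   those of z; its index at layer i is read off from the phases. *)
Definition route (l : nat) (x m z : seq nat) (i : nat) : seq nat :=
  mkseq (fun k => nth 0 [:: nth 0 x k; nth 0 m k; nth 0 z k] (phase l i k)) l.

Section Route.
Variables (b l : nat) (x m z : seq nat).
Hypotheses (vx : valid_idx b l x) (vm : valid_idx b l m) (vz : valid_idx b l z).

Lemma route_valid i : valid_idx b l (route l x m z i).
Proof.
split=> [|k lt_k]; first by rewrite size_mkseq.
rewrite nth_mkseq //; case: (phase l i k) => [|[|p]] /=.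
- by case: vx => _; apply.
- by case: vm => _; apply.
- by case: p => [|p]; [case: vz => _; apply | rewrite /= nth_nil /sz expn_gt0].
Qed.

Lemma route_const i y : size y = l ->
  (forall k, k < l -> nth 0 [:: nth 0 x k; nth 0 m k; nth 0 z k] (phase l i k) = nth 0 y k) ->
  route l x m z i = y.
Proof.
move=> size_y route_y; apply: (@eq_from_nth _ 0); rewrite size_mkseq ?size_y // => k lt_k.
by rewrite nth_mkseq // route_y.
Qed.

Lemma route_0 : route l x m z 0 = x.
Proof. by case: vx => size_x _; apply: route_const. Qed.

Lemma route_l : route l x m z l = m.
Proof. by case: vm => size_m _; apply: route_const => // k /phase_l ->. Qed.

Lemma route_2l : route l x m z (2 * l) = z.
Proof. by case: vz => size_z _; apply: route_const => // k /phase_2l ->. Qed.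

Lemma route_step i : i < 2 * l ->
  route l x m z i.+1 = hnext l i (route l x m z i) (nth 0 (route l x m z i.+1) (cc l i)).
Proof.
move=> lt_i; have lt_c := cc_lt lt_i.
apply: (@eq_from_nth _ 0) => [|k]; first by rewrite size_set_nth !size_mkseq; lia.
rewrite size_mkseq => lt_k; rewrite nth_set_nth /=; case: eqP => [-> // | ne_kc].
by rewrite !nth_mkseq // phase_step // (introF eqP ne_kc) addn0.
Qed.

Lemma route_cc i : i < 2 * l ->
  nth 0 (route l x m z i) (cc l i) = (if l <= i then nth 0 m (cc l i) else nth 0 x (cc l i))
  /\ nth 0 (route l x m z i.+1) (cc l i) =
     (if l <= i then nth 0 z (cc l i) else nth 0 m (cc l i)).
Proof.
move=> lt_i; have lt_c := cc_lt lt_i.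
by rewrite !nth_mkseq // phase_step // eqxx phase_cc //; case: (l <= i).
Qed.

End Route.

Definition coord (j : seq nat) (k : nat) : int := (nth 0 j k)%:Z.

Local Open Scope ring_scope.

(* Along an edge of H it grows by at most the weight of the edge, with
   equality exactly when the coordinate moves by lam_{c(i)}. *)
Definition phi (b l : nat) (lam : nat -> int) (i : nat) (j : seq nat) : int :=
  i%:Z * (Aw b l)%:Z + \sum_(k < l) (2 * lam k * coord j k - (phase l i k)%:Z * lam k ^+ 2).

Lemma wt_int b l i j t :
  (wt b l i j t)%:Z = (Aw b l)%:Z + (t%:Z - coord j (cc l i)) ^+ 2.
Proof. by rewrite /wt /coord; nia. Qed.

Lemma phi_step b l (lam : nat -> int) i j t : (i < 2 * l)%N ->
  phi b l lam i.+1 (hnext l i j t) - phi b l lam i j =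
  (Aw b l)%:Z + 2 * lam (cc l i) * (t%:Z - coord j (cc l i)) - lam (cc l i) ^+ 2.
Proof.
move=> lt_i; rewrite /phi opprD addrACA -sumrB (bigD1 (Ordinal (cc_lt lt_i))) //=.
rewrite big1 => [|k ne_kc]; last first.
  have {}ne_kc : (k == cc l i :> nat) = false := negPf ne_kc.
  by rewrite /coord nth_set_nth /= ne_kc phase_step ?ne_kc ?addn0 ?subrr ?ltn_ord //.
by rewrite /coord nth_set_nth /= eqxx phase_step ?eqxx ?cc_lt //; lia.
Qed.

Lemma wt_sub_phi_step b l (lam : nat -> int) i j t : (i < 2 * l)%N ->
  (wt b l i j t)%:Z - (phi b l lam i.+1 (hnext l i j t) - phi b l lam i j) =
  (t%:Z - coord j (cc l i) - lam (cc l i)) ^+ 2.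
Proof. by move=> lt_i; rewrite phi_step // wt_int; ring. Qed.

(* The potential extended to all of G: it rises by one per step down an
   out-tree, falls by one per step up an in-tree, and is interpolated along
   each subdivided edge with slope one, truncated at the required increment. *)
Definition clamp (q D : int) : int := Num.max (- q) (Num.min q D).

Definition Phi (b l : nat) (lam : nat -> int) (v : vtx) : int :=
  match v with
  | VMain i j => phi b l lam i j
  | VTree i j o d _ =>
      if o then phi b l lam i j + d%:Z + 1 else phi b l lam i j - d%:Z - 1
  | VPath i j t q => phi b l lam i j + b%:Z + 1 +
      clamp q%:Z (phi b l lam i.+1 (hnext l i j t) - phi b l lam i j - 2 * b%:Z - 2)
  end.

(* The increment of the potential needed along a subdivided edge never
   exceeds the number of its steps: this is where A = 3 l s^2 is large. *)
Lemma path_slack b l (lam : nat -> int) i j t :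
  (i < 2 * l)%N -> valid_idx b l j -> (t < sz b)%N -> `|lam (cc l i)| <= (sz b)%:Z ->
  `|phi b l lam i.+1 (hnext l i j t) - phi b l lam i j - 2 * b%:Z - 2| <= (plen b l i j t)%:Z.
Proof.
move=> lt_i [_ j_lt] lt_t lam_le.
have lt_u := j_lt _ (cc_lt lt_i).
have A_ge := Aw_ge b (leq_ltn_trans (leq0n _) (cc_lt lt_i)).
have s_gt := sz_gt b.
have plen_int : (plen b l i j t)%:Z = (wt b l i j t)%:Z - 2 * b%:Z - 2.
  by rewrite /plen /wt; nia.
rewrite plen_int wt_int phi_step // /coord ler_norml.
move: lam_le lt_u A_ge; set u := nth 0 j (cc l i); set la := lam (cc l i) => la_le lt_u A_ge.
set s := sz b in A_ge s_gt la_le lt_t lt_u *.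
have la2 : la ^+ 2 <= s%:Z ^+ 2 by nia.
have s2 : b%:Z + 1 <= s%:Z ^+ 2 by nia.
have := sqr_ge0 (t%:Z - u%:Z - la); have := sqr_ge0 (t%:Z - u%:Z + la).
rewrite !sqrrD !sqrrN; lia.
Qed.

Lemma Phi_pathpt b l lab (lam : nat -> int) i j t q :
  (q <= plen b l i j t)%N ->
  `|phi b l lam i.+1 (hnext l i j t) - phi b l lam i j - 2 * b%:Z - 2| <= (plen b l i j t)%:Z ->
  Phi b l lam (pathpt b l lab i j t q) = phi b l lam i j + b%:Z + 1 +
    clamp q%:Z (phi b l lam i.+1 (hnext l i j t) - phi b l lam i j - 2 * b%:Z - 2).
Proof.
rewrite /pathpt /clamp; case: eqP => [-> | _] /=; first lia.
by case: eqP => [-> | _] //= _; rewrite -/(hnext l i j t); lia.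
Qed.

Lemma Phi_lipschitz b l lab (lam : nat -> int) :
  (forall k, (k < l)%N -> `|lam k| <= (sz b)%:Z) ->
  forall u v, adjG b l lab u v -> `|Phi b l lam u - Phi b l lam v| <= 1.
Proof.
move=> lam_le; suff arc_lip x y : arc b l lab x y -> `|Phi b l lam x - Phi b l lam y| <= 1.
  by move=> u v [] /arc_lip; rewrite // distrC.
case=> [i j _ _ | i j _ _ _ | i j [] d p c _ _ _ _ _ | i j t q lt_i vj lt_t lt_q] /=; try lia.
have slack := path_slack lt_i vj lt_t (lam_le _ (cc_lt lt_i)).
rewrite !(Phi_pathpt _ _ slack) ?(ltnW lt_q) // /clamp; lia.
Qed.

Definition dif (y x : seq nat) (k : nat) : int := coord y k - coord x k.

Lemma dif_bound b l y x k :
  valid_idx b l y -> valid_idx b l x -> (k < l)%N -> `|dif y x k| <= (sz b)%:Z.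
Proof.
move=> [_ y_lt] [_ x_lt] lt_k; have := y_lt _ lt_k; have := x_lt _ lt_k.
by rewrite /dif /coord; lia.
Qed.

Lemma phi_gain b l i0 i1 x y : (i0 <= i1)%N ->
  (forall k, (k < l)%N -> phase l i1 k = (phase l i0 k).+1) ->
  phi b l (dif y x) i1 y - phi b l (dif y x) i0 x =
  ((i1 - i0) * Aw b l)%N%:Z + \sum_(k < l) dif y x k ^+ 2.
Proof.
move=> le_i phase_next; rewrite /phi opprD addrACA -sumrB; congr (_ + _); first nia.
by apply: eq_bigr => k _; rewrite phase_next // intS /dif; ring.
Qed.

Lemma phi_gain_first b l x j :
  phi b l (dif j x) l j - phi b l (dif j x) 0 x =
  (l * Aw b l)%N%:Z + \sum_(k < l) dif j x k ^+ 2.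
Proof. by rewrite phi_gain ?subn0 // => k /phase_l ->. Qed.

Lemma phi_gain_second b l j z :
  phi b l (dif z j) (2 * l) z - phi b l (dif z j) l j =
  (l * Aw b l)%N%:Z + \sum_(k < l) dif z j k ^+ 2.
Proof.
rewrite phi_gain ?leq_pmull // => [|k lt_k]; last by rewrite phase_l ?phase_2l.
by congr (_ %:Z + _); lia.
Qed.

(* Cost of routing through v_{l,j}: the weight of the route x -> j -> z
   minus the 2l copies of A. *)
Definition Cost (l : nat) (x z j : seq nat) : int :=
  \sum_(k < l) dif j x k ^+ 2 + \sum_(k < l) dif z j k ^+ 2.

(* Lower bound: a walk from v_{0,x} to v_{2l,z} crosses the middle layer at
   some v_{l,j} and is at least as long as the route of H through it.  Each
   half is bounded with the potential in the direction it has to travel. *)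
Lemma walk_length_lower b l lab ok x z n :
  (0 < l)%N -> valid_idx b l x -> valid_idx b l z ->
  walk (adjG b l lab) ok n (VMain 0 x) (VMain (2 * l) z) ->
  exists j, [/\ valid_idx b l j, ok (VMain l j) &
                (2 * l * Aw b l)%N%:Z + Cost l x z j <= n%:Z].
Proof.
move=> l_gt0 vx vz /(walk_through_middle l_gt0) [j [n1 [n2 [vj <- W1 W2]]]].
exists j; split=> //; first exact: walk_ok_l W2.
have /= := walk_potential (Phi_lipschitz (lab := lab) (fun k => @dif_bound b l j x k vj vx)) W1.
have /= := walk_potential (Phi_lipschitz (lab := lab) (fun k => @dif_bound b l z j k vz vj)) W2.
rewrite phi_gain_first phi_gain_second /Cost; nia.
Qed.

(* The route meets the middle layer only at v_{l,m}. *)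
Lemma route_kept b l R x m z i :
  ~ R m -> valid_idx b l m -> kept l R (VMain i (route l x m z i)).
Proof. by move=> notRm vm [j [[-> <-]]]; rewrite (route_l x z vm). Qed.

(* Upper bound: following the route of H from layer i0 to layer i0 + r is a
   walk of G whose length is the gain of any potential whose direction agrees
   with every step of the route, since each edge is then tight. *)
Lemma route_walk b l lab R x m z (lam : nat -> int) i0 r :
  good_lab b lab -> valid_idx b l x -> valid_idx b l m -> valid_idx b l z -> ~ R m ->
  (i0 + r <= 2 * l)%N ->
  (forall i, (i0 <= i < i0 + r)%N ->
     lam (cc l i) = dif (route l x m z i.+1) (route l x m z i) (cc l i)) ->
  exists n, walk (adjG b l lab) (kept l R) n
              (VMain i0 (route l x m z i0)) (VMain (i0 + r) (route l x m z (i0 + r))) /\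
    n%:Z = phi b l lam (i0 + r) (route l x m z (i0 + r)) - phi b l lam i0 (route l x m z i0).
Proof.
move=> good vx vm vz notRm.
elim: r => [|r IH] le_r lam_route.
  by exists 0; rewrite addn0 subrr; split=> //; apply: walk0; exact: route_kept notRm vm.
rewrite addnS in le_r lam_route *; set i := (i0 + r)%N in le_r IH lam_route *.
have [|n [W nE]] := IH (ltnW le_r).
  by move=> i' /andP[le_i' lt_i']; apply: lam_route; rewrite le_i' ltnS ltnW.
set t := nth 0%N (route l x m z i.+1) (cc l i).
have lt_t : (t < sz b)%N by case: (route_valid vx vm vz i.+1) => _; apply; apply: cc_lt.
have step : hnext l i (route l x m z i) t = route l x m z i.+1 by rewrite -route_step.
have keep_next : kept l R (VMain i.+1 (hnext l i (route l x m z i) t)).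
  by rewrite step; exact: route_kept notRm vm.
have edge := edge_walk good le_r (route_valid vx vm vz i) lt_t (route_kept notRm vm) keep_next.
rewrite step in edge.
exists (n + wt b l i (route l x m z i) t); split; first exact: walk_cat W edge.
have tight := @wt_sub_phi_step b l lam i (route l x m z i) t le_r.
rewrite step lam_route ?leq_addr ?ltnS ?leqnn // /dif /coord -/t in tight.
by rewrite PoszD nE; nia.
Qed.

Lemma walk_length_upper b l lab R x m z :
  good_lab b lab -> valid_idx b l x -> valid_idx b l m -> valid_idx b l z -> ~ R m ->
  exists n, walk (adjG b l lab) (kept l R) n (VMain 0 x) (VMain (2 * l) z) /\
            n%:Z = (2 * l * Aw b l)%N%:Z + Cost l x z m.
Proof.
move=> good vx vm vz notRm.
have first_dir i : (0 <= i < 0 + l)%N ->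
    dif m x (cc l i) = dif (route l x m z i.+1) (route l x m z i) (cc l i).
  rewrite /dif /coord => /andP[_ lt_i]; have lt_i2 : (i < 2 * l)%N by lia.
  by have [-> ->] := route_cc x m z lt_i2; rewrite ifF // leqNgt lt_i.
have second_dir i : (l <= i < l + l)%N ->
    dif z m (cc l i) = dif (route l x m z i.+1) (route l x m z i) (cc l i).
  rewrite /dif /coord => /andP[le_i lt_i]; have lt_i2 : (i < 2 * l)%N by lia.
  by have [-> ->] := route_cc x m z lt_i2; rewrite le_i.
have le_first : (0 + l <= 2 * l)%N by lia.
have le_second : (l + l <= 2 * l)%N by lia.
have [n1 [W1 E1]] := route_walk good vx vm vz notRm le_first first_dir.
have [n2 [W2 E2]] := route_walk good vx vm vz notRm le_second second_dir.
rewrite add0n (route_0 m z vx) (route_l x z vm) in W1 E1.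
rewrite addnn -mul2n (route_l x z vm) (route_2l x m vz) in W2 E2.
exists (n1 + n2); split; first exact: walk_cat W1 W2.
by rewrite PoszD E1 E2 phi_gain_first phi_gain_second /Cost; nia.
Qed.

Lemma midpoint_valid b l x z :
  valid_idx b l x -> valid_idx b l z -> valid_idx b l (midpoint l x z).
Proof.
move=> [_ x_lt] [_ z_lt]; split=> [|k lt_k]; first by rewrite size_mkseq.
by rewrite nth_mkseq // ltn_half_double; have := x_lt _ lt_k; have := z_lt _ lt_k; lia.
Qed.

Lemma Cost_midpoint l x z j :
  (forall k, (k < l)%N -> odd (nth 0 x k) = odd (nth 0 z k)) ->
  Cost l x z j = Cost l x z (midpoint l x z) + 2 * \sum_(k < l) dif j (midpoint l x z) k ^+ 2.
Proof.
move=> parity; rewrite /Cost mulr_sumr -!big_split /=; apply: eq_bigr => k _.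
have mid : coord x k = 2 * coord (midpoint l x z) k - coord z k.
  have := @even_halfK (nth 0 x k + nth 0 z k)%N; rewrite oddD parity // addbb /coord nth_mkseq //.
  by move=> /(_ isT); lia.
by rewrite /dif mid; ring.
Qed.

Lemma Cost_midpoint_min l x z j :
  (forall k, (k < l)%N -> odd (nth 0 x k) = odd (nth 0 z k)) -> size j = l ->
  Cost l x z (midpoint l x z) <= Cost l x z j /\
  (j <> midpoint l x z -> Cost l x z (midpoint l x z) < Cost l x z j).
Proof.
move=> parity size_j; rewrite (Cost_midpoint j parity).
set dist2 := \sum_(k < l) _.
have dist2_ge0 : 0 <= dist2 by apply: sumr_ge0 => k _; apply: sqr_ge0.
split=> [|ne_jm]; first lia.
suff : dist2 != 0 by lia.
apply/eqP => /psumr_eq0P all0; apply: ne_jm.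
apply: (@eq_from_nth _ 0%N) => [|k]; rewrite ?size_mkseq // size_j => lt_k.
have /eqP := all0 (fun k _ => sqr_ge0 _) (Ordinal lt_k) isT.
by rewrite /dif /coord sqrf_eq0 subr_eq0 => /eqP [].
Qed.

Definition opt_len (b l : nat) (x z : seq nat) : int :=
  (2 * l * Aw b l)%N%:Z + Cost l x z (midpoint l x z).

Lemma walk_length_midpoint b l lab ok x z n :
  (0 < l)%N -> valid_idx b l x -> valid_idx b l z ->
  (forall k, (k < l)%N -> odd (nth 0 x k) = odd (nth 0 z k)) ->
  walk (adjG b l lab) ok n (VMain 0 x) (VMain (2 * l) z) ->
  exists j, [/\ ok (VMain l j), opt_len b l x z <= n%:Z &
                j <> midpoint l x z -> opt_len b l x z < n%:Z].
Proof.
move=> l_gt0 vx vz parity /(walk_length_lower l_gt0 vx vz) [j [[size_j _] ok_j le_n]].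
have [le_cost lt_cost] := Cost_midpoint_min parity size_j.
by exists j; split=> // [|/lt_cost]; rewrite /opt_len; lia.
Qed.

Local Close Scope ring_scope.

Theorem mainTheorem7 (b l : nat) (lab : labelling) (R : seq nat -> Prop)
    (x z : seq nat) :
  1 <= b -> 1 <= l -> good_lab b lab ->
  valid_idx b l x -> valid_idx b l z ->
  (forall k, k < l -> odd (nth 0 x k) = odd (nth 0 z k)) ->
  (~ R (midpoint l x z) <->
   exists d : option nat,
     is_dist (adjG b l lab) (kept l R) (VMain 0 x) (VMain (2 * l) z) d /\
     is_dist (adjG b l lab) (fun _ => True) (VMain 0 x) (VMain (2 * l) z) d).
Proof.
move=> _ l_gt0 good vx vz parity.
have vm := midpoint_valid vx vz.
have lower ok n := @walk_length_midpoint b l lab ok x z n l_gt0 vx vz parity.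
have [n0 [W0 n0E]] := walk_length_upper (R := fun _ => False) good vx vm vz id.
have W0_all := walk_mono (fun _ _ => I) W0.
split=> [notRm | [[n|] [dist_kept dist_all]] Rm].
- have [n [W nE]] := walk_length_upper good vx vm vz notRm.
  have n_min ok n' : walk (adjG b l lab) ok n' (VMain 0 x) (VMain (2 * l) z) -> n <= n'.
    by move=> /lower [j [_ le_n' _]]; move: le_n'; rewrite /opt_len; lia.
  exists (Some n); split; apply: is_dist_Some (n_min _) => //.
  exact: walk_mono W.
- have [W _] := dist_kept; have [_ n_min] := dist_all.
  have [j [keep_j _ lt_n]] := lower _ _ W.
  have ne_jm : j <> midpoint l x z by move=> eq_jm; apply: keep_j; exists j; rewrite eq_jm.
  by apply: (n_min n0) W0_all; have := lt_n ne_jm; rewrite /opt_len; lia.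
- exact: dist_all n0 W0_all.
Qed.
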